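(* There exists an instance with three agents $N=\{1,2,3\}$ and a finite item set $A$ in which all values $V_i(j,a)$ are nonnegative, together with a complete allocation that is envy-free but satisfies neither PROP-Max nor PROP-Ave.
   Context: Setting: agents $N=\{1,\dots,n\}$, finite item set $A$; a complete allocation $\pi$ partitions $A$ into bundles $\pi_1,\dots,\pi_n$; $\pi(a)$ is the agent receiving $a$; $V_i(j,a)\in\mathbb{R}$ is agent $i$'s value when item $a$ goes to agent $j$; $V_i(\pi)=\sum_{a\in A}V_i(\pi(a),a)$. $\pi^{i\leftrightarrow j}$ is $\pi$ with bundles of $i$ and $j$ swapped. $\pi$ is envy-free if there are no $i,j$ with $V_i(\pi^{i\leftrightarrow j})>V_i(\pi)$. With $V_i^{max}(a)=\max_{j\in N}V_i(j,a)$, $\pi$ satisfies PROP-Max if $V_i(\pi)\ge\frac1n\sum_{a\in A}V_i^{max}(a)$ for all $i$, and PROP-Ave if $V_i(\pi)\ge\frac1n\sum_{a\in A}\sum_{j\in N}V_i(j,a)$ for all $i$. *)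

From HB Require Import structures.
From mathcomp Require Import all_boot all_order all_algebra.
From mathcomp Require Import Rstruct.
From Stdlib Require Import Reals.
Set Implicit Arguments. Unset Strict Implicit. Unset Printing Implicit Defensive.
Import Order.TTheory GRing.Theory Num.Theory.
Local Open Scope ring_scope.

(* V i j a = value of agent i when item a goes to agent j.
   A complete allocation is a function pi : A -> 'I_n (pi a = receiving agent);
   bundle pi_j = {a | pi a = j}. *)

Definition valuation (n : nat) (A : finType) := 'I_n -> 'I_n -> A -> R.
Definition allocation (n : nat) (A : finType) := {ffun A -> 'I_n}.

Definition util n (A : finType) (V : valuation n A) (i : 'I_n)
  (pi : allocation n A) : R :=
  \sum_(a : A) V i (pi a) a.

Definition swap_alloc n (A : finType) (pi : allocation n A) (i j : 'I_n)
  : allocation n A :=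
  [ffun a => if pi a == i then j else if pi a == j then i else pi a].

Definition envy_free n (A : finType) (V : valuation n A) (pi : allocation n A)
  : Prop :=
  ~ (exists i j : 'I_n, util V i (swap_alloc pi i j) > util V i pi).

Definition Vmax n (A : finType) (V : valuation n A) (i : 'I_n) (a : A) : R :=
  (* max over j in N; seeded with V i i a, itself one of the terms *)
  \big[Num.max/V i i a]_(j : 'I_n) V i j a.

Definition PROP_Max n (A : finType) (V : valuation n A) (pi : allocation n A)
  : Prop :=
  forall i : 'I_n, util V i pi >= (n%:R)^-1 * \sum_(a : A) Vmax V i a.

Definition PROP_Ave n (A : finType) (V : valuation n A) (pi : allocation n A)
  : Prop :=
  forall i : 'I_n,
    util V i pi >= (n%:R)^-1 * \sum_(a : A) \sum_(j : 'I_n) V i j a.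

From HB Require Import structures.
From mathcomp Require Import all_boot all_order all_algebra perm.
From mathcomp Require Import Rstruct.
From Stdlib Require Import Reals.
Import Order.TTheory GRing.Theory Num.Theory.
Local Open Scope ring_scope.

(* With externalities an agent may care only about who else receives an item.
   Give the single item to agent 0 and let agent 1 value it only in the hands
   of agent 2; agents 0 and 2 value nothing.  A swap involving agent 1 exchanges the bundles of 1 and some j,
   so it can move the item from agent 0 only to agent 1, never to agent 2:
   nobody envies.  Yet agent 1 gets 0 while her maximal value for the item is
   1, which violates PROP-Max, and PROP-Ave is stronger than PROP-Max for
   nonnegative values. *)

Section Proportionality.
Context {n : nat} {A : finType} {V : valuation n A}.
Hypothesis V_ge0 : forall i j a, 0 <= V i j a.

Lemma Vmax_ge i j a : V i j a <= Vmax V i a.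
Proof. exact: le_bigmax. Qed.

Lemma Vmax_le_sum i a : Vmax V i a <= \sum_j V i j a.
Proof.
have term_le_sum j : V i j a <= \sum_k V i k a.
  by rewrite (bigD1 j) //= lerDl sumr_ge0.
exact: bigmax_le.
Qed.

Lemma PROP_Ave_PROP_Max pi : PROP_Ave V pi -> PROP_Max V pi.
Proof.
move=> propAve i; apply: le_trans (propAve i).
by rewrite ler_wpM2l ?invr_ge0 ?ler0n // ler_sum // => a _; exact: Vmax_le_sum.
Qed.

Lemma util0_not_PROP_Max pi i j a :
  util V i pi = 0 -> 0 < V i j a -> ~ PROP_Max V pi.
Proof.
move=> util0 Vij_gt0 /(_ i); rewrite util0 leNgt => /negP; apply.
have n_gt0 : (0 < n)%nat by apply: leq_ltn_trans (ltn_ord i).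
have Vmax_ge0 b : 0 <= Vmax V i b := le_trans (V_ge0 i i b) (Vmax_ge i i b).
rewrite mulr_gt0 ?invr_gt0 ?ltr0n // (bigD1 a) //=.
apply: ltr_wpDr; first by apply: sumr_ge0.
exact: lt_le_trans Vij_gt0 (Vmax_ge i j a).
Qed.

End Proportionality.

Lemma swap_allocE n (A : finType) (pi : allocation n A) i j a :
  swap_alloc pi i j a = tperm i j (pi a).
Proof.
rewrite ffunE; case: tpermP => [->|->|/eqP/negPf-> /eqP/negPf->] //.
  by rewrite eqxx.
by rewrite eqxx; case: eqP.
Qed.

Lemma util_item1 n (V : valuation n 'I_1) i pi :
  util V i pi = V i (pi ord0) ord0.
Proof. by rewrite /util big_ord1. Qed.

Definition externality_valuation : valuation 3 'I_1 :=
  fun i j _ => if (i == 1) && (j == 2) then 1 else 0.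

Definition alloc_to0 : allocation 3 'I_1 := [ffun => 0].

Lemma externality_valuation_ge0 i j a : 0 <= externality_valuation i j a.
Proof. by rewrite /externality_valuation; case: ifP; rewrite ?ler01. Qed.

Lemma envy_free_alloc_to0 : envy_free externality_valuation alloc_to0.
Proof.
move=> [i [j]]; rewrite !util_item1 swap_allocE ffunE /externality_valuation /= andbF.
case: ifP => [/andP[/eqP-> /eqP] | _]; last by rewrite ltxx.
by case: tpermP => // /(congr1 val).
Qed.

Lemma util_alloc_to0 : util externality_valuation 1 alloc_to0 = 0.
Proof. by rewrite util_item1 ffunE. Qed.

Theorem proposition3 :
  exists (A : finType) (V : valuation 3 A) (pi : allocation 3 A),
    (forall (i j : 'I_3) (a : A), 0 <= V i j a) /\
    envy_free V pi /\ ~ PROP_Max V pi /\ ~ PROP_Ave V pi.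
Proof.
have notPROP_Max : ~ PROP_Max externality_valuation alloc_to0.
  apply: (util0_not_PROP_Max externality_valuation_ge0 _ 1 2 ord0 util_alloc_to0).
  by rewrite /externality_valuation /= ltr01.
exists 'I_1, externality_valuation, alloc_to0; split; first exact: externality_valuation_ge0.
split; first exact: envy_free_alloc_to0.
by split=> // /(PROP_Ave_PROP_Max externality_valuation_ge0).
Qed.
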